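(* Let $m\ge3$ be odd and let $s=s(m)$. For every integer $n\ge2$ and every $t\in1+2\mathbb{Z}_2$, one has $$v_2\big(T_m(1+2^nt)-(1+2^nt)\big)=s+n+1.$$
   Context: $v_2$ is the $2$-adic valuation on $\mathbb{Z}_2$. For an integer $m\ge0$, the $m$-th Chebyshev polynomial is $$T_m(x)=\sum_{k=0}^{\lfloor m/2\rfloor}(-1)^k\frac{m}{m-k}\binom{m-k}{k}2^{m-2k-1}x^{m-2k}.$$ For odd $m\ge3$, $s(m)=\max\{n\ge2:\ 2^n\mid(m+1)\text{ or }2^n\mid(m-1)\}$. *)

From HB Require Import structures.
From mathcomp Require Import all_boot all_order all_algebra.
Set Implicit Arguments. Unset Strict Implicit. Unset Printing Implicit Defensive.
Import Order.TTheory GRing.Theory Num.Theory.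

(* 2-adic valuation of a (nonzero) integer; v2 0 = 0 by convention of logn,
   irrelevant below since the asserted value is positive. *)
Definition v2 (x : int) : nat := logn 2 `|x|%N.

(* Chebyshev polynomial T_m evaluated at an integer x, by the explicit formula
   sum_{k=0}^{floor(m/2)} (-1)^k * m/(m-k) * C(m-k,k) * 2^(m-2k-1) * x^(m-2k).
   (m/(m-k) * C(m-k,k) is an integer, computed as (m * C(m-k,k)) %/ (m-k);
   valid for m >= 1, in particular for odd m >= 3.) *)
Definition chebT (m : nat) (x : int) : int :=
  (\sum_(k < (m./2).+1)
     (-1) ^+ k * ((m * 'C(m - k, k)) %/ (m - k) * 2 ^ (m - 2 * k - 1))%:Z
       * x ^+ (m - 2 * k))%R.

(* s(m) = max { n >= 2 : 2^n | m+1 or 2^n | m-1 }  (such n satisfy n < m+2) *)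
Definition s_of (m : nat) : nat :=
  \max_(n < m.+2 | (1 < n) && ((2 ^ n %| m.+1) || (2 ^ n %| m.-1))) n.

(* 2-adic integers are represented as (classes of) 2-adically Cauchy sequences
   of integers: t k+1 = t k mod 2^k.  The 2-adic integer is lim t k. *)
Definition Z2seq (t : nat -> int) : Prop :=
  forall k : nat, (((2:int) ^+ k)%R %| (t k.+1 - t k)%R)%Z.

Definition in_1_2Z2 (t : nat -> int) : Prop := ((2:int) %| (t 1%N - 1)%R)%Z.

(* Put x = 1 + 2^n t and m = 2b + 1.  The pair (T_k(x), U_{k-1}(x)) obeys the
   addition formulas of (x + sqrt(x^2 - 1))^k, which together with the Pell
   identity T_k^2 - (x^2 - 1) U_{k-1}^2 = 1 give
     T_m(x) - x = 2 (x^2 - 1) U_b(x) U_{b-1}(x).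
   For odd x every T_k(x) is odd and U_{k-1}(x) = k mod 2; as U_{2k-1} = 2 T_k U_{k-1},
   the valuation of U_{k-1}(x) is v_2(k).  Since v_2(x^2 - 1) = n + 1 for n >= 2,
   the valuation of T_m(x) - x is 1 + (n + 1) + v_2(b) + v_2(b + 1), while
   s(m) = 1 + v_2(b) + v_2(b + 1) because one of b, b + 1 is odd.
   The explicit formula is identified with T_m through 2 T_m = U_m - U_{m-2}: its
   coefficient m/(m-k) C(m-k,k) equals C(m-k,k) + C(m-k-1,k-1).
   Finally the terms t_k, k >= 1, of a 2-adic t in 1 + 2Z_2 are odd integers, and
   the valuation is the same for all of them. *)

From mathcomp Require Import all_boot all_order all_algebra.
From mathcomp Require Import zify ring.
Import GRing.Theory Num.Theory.

Set Implicit Arguments.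
Unset Strict Implicit.
Unset Printing Implicit Defensive.

Section Chebyshev.
Variable R : comPzRingType.
Implicit Types x : R.
Local Open Scope ring_scope.

(* (T_k(x), U_{k-1}(x)): the coordinates of (x + sqrt(x^2 - 1))^k on 1, sqrt(x^2 - 1). *)
Fixpoint cheb_pair x k : R * R :=
  if k is k'.+1 then
    let p := cheb_pair x k' in (x * p.1 + (x ^+ 2 - 1) * p.2, p.1 + x * p.2)
  else (1, 0).

Definition tcheb x k := (cheb_pair x k).1.
Definition ucheb x k := (cheb_pair x k).2.

Lemma tchebS x k : tcheb x k.+1 = x * tcheb x k + (x ^+ 2 - 1) * ucheb x k.
Proof. by []. Qed.

Lemma uchebS x k : ucheb x k.+1 = tcheb x k + x * ucheb x k.
Proof. by []. Qed.

Lemma cheb_pairD x a b :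
  tcheb x (a + b) = tcheb x a * tcheb x b + (x ^+ 2 - 1) * ucheb x a * ucheb x b /\
  ucheb x (a + b) = tcheb x a * ucheb x b + ucheb x a * tcheb x b.
Proof.
elim: a => [|a [IHt IHu]]; first by split; rewrite /tcheb /ucheb /=; ring.
by rewrite addSn !tchebS !uchebS IHt IHu; split; ring.
Qed.

Lemma tcheb_pell x k : tcheb x k ^+ 2 - (x ^+ 2 - 1) * ucheb x k ^+ 2 = 1.
Proof.
elim: k => [|k IH]; first by rewrite /tcheb /ucheb /=; ring.
by rewrite tchebS uchebS -[RHS]IH; ring.
Qed.

Lemma tcheb_double_succ_sub x b :
  tcheb x (b + b).+1 - x = 2 * (x ^+ 2 - 1) * ucheb x b.+1 * ucheb x b.
Proof.
have factor T U : (x * T + (x ^+ 2 - 1) * U) * T + (x ^+ 2 - 1) * (T + x * U) * U - x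
    - 2 * (x ^+ 2 - 1) * (T + x * U) * U = x * (T ^+ 2 - (x ^+ 2 - 1) * U ^+ 2 - 1).
  by ring.
apply/eqP; rewrite -subr_eq0 -addSn (proj1 (cheb_pairD x b.+1 b)) tchebS uchebS.
by rewrite factor tcheb_pell subrr mulr0.
Qed.

Lemma ucheb_double x k : ucheb x (k + k) = 2 * tcheb x k * ucheb x k.
Proof. by rewrite (proj2 (cheb_pairD x k k)); ring. Qed.

Lemma tcheb_ucheb x k : 2 * tcheb x k.+1 = ucheb x k.+2 - ucheb x k.
Proof. by rewrite !uchebS !tchebS; ring. Qed.

Lemma ucheb_rec x k : ucheb x k.+2 = 2 * x * ucheb x k.+1 - ucheb x k.
Proof. by rewrite !uchebS tchebS; ring. Qed.

Definition ucheb_term x m k : R := (-1) ^+ k * 'C(m - k, k)%:R * (2 * x) ^+ (m - 2 * k).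

Definition ucheb_sum x m : R := \sum_(k < m.+1) ucheb_term x m k.

Lemma ucheb_term_small x m k : (m < k + k)%N -> ucheb_term x m k = 0.
Proof. by move=> ?; rewrite /ucheb_term bin_small ?(mulr0n, mulr0, mul0r) //; lia. Qed.

Lemma ucheb_termS x m k :
  ucheb_term x m.+2 k.+1 = 2 * x * ucheb_term x m.+1 k.+1 - ucheb_term x m k.
Proof.
have [lt|le] := ltnP m (k + k).
  by rewrite !ucheb_term_small ?mulr0 ?subr0 //; lia.
have mid : 2 * x * ucheb_term x m.+1 k.+1 =
    (-1) ^+ k.+1 * 'C(m - k, k.+1)%:R * (2 * x) ^+ (m - 2 * k).
  rewrite /ucheb_term subSS; have [lt|ge] := ltnP (k + k) m.
    by rewrite (_ : m - 2 * k = (m.+1 - 2 * k.+1).+1)%N; [rewrite !exprS; ring | lia].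
  by rewrite bin_small ?(mulr0n, mulr0, mul0r) //; lia.
rewrite mid /ucheb_term subSS (subSn (leq_trans (leq_addl k k) le)) binS natrD.
by rewrite (_ : m.+2 - 2 * k.+1 = m - 2 * k)%N; [rewrite !exprS; ring | lia].
Qed.

Lemma big_ucheb_term_widen x m N j : (m < N + N)%N ->
  \sum_(k < N + j) ucheb_term x m k = \sum_(k < N) ucheb_term x m k.
Proof.
move=> lt; rewrite big_split_ord /= [X in _ + X]big1 ?addr0 // => k _.
by apply: ucheb_term_small; lia.
Qed.

Lemma ucheb_sum_range x m N : (m < N + N)%N ->
  \sum_(k < N) ucheb_term x m k = ucheb_sum x m.
Proof.
move=> lt; rewrite -(@big_ucheb_term_widen x m N m.+1 lt) addnC.
by rewrite big_ucheb_term_widen //; lia.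
Qed.

Lemma ucheb_sum_rec x m : ucheb_sum x m.+2 = 2 * x * ucheb_sum x m.+1 - ucheb_sum x m.
Proof.
rewrite -(@ucheb_sum_range x m.+1 m.+3) -?(@ucheb_sum_range x m m.+2); try lia.
rewrite /ucheb_sum [in LHS]big_ord_recl [X in 2 * x * X]big_ord_recl /=.
rewrite (eq_bigr (fun i : 'I_m.+2 => 2 * x * ucheb_term x m.+1 i.+1 - ucheb_term x m i)).
  rewrite sumrB -mulr_sumr (_ : ucheb_term x m.+2 0 = 2 * x * ucheb_term x m.+1 0); first ring.
  by rewrite /ucheb_term !subn0 !bin0 exprS; ring.
by move=> i _; exact: ucheb_termS.
Qed.

Lemma ucheb_sumE x m : ucheb_sum x m = ucheb x m.+1.
Proof.
suff: ucheb_sum x m = ucheb x m.+1 /\ ucheb_sum x m.+1 = ucheb x m.+2 by case.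
elim: m => [|m [IH1 IH2]]; last by split=> //; rewrite ucheb_sum_rec ucheb_rec IH1 IH2.
rewrite /ucheb_sum /ucheb_term !big_ord_recr !big_ord0 /ucheb /tcheb /=.
by rewrite !subn0 !bin0 subnn bin0n mulr0n; split; ring.
Qed.

End Chebyshev.

Lemma chebT_coef m j : j.+1 < m ->
  (m * 'C(m - j.+1, j.+1)) %/ (m - j.+1) = 'C(m - j.+1, j.+1) + 'C(m - j.+2, j).
Proof.
move=> lt; rewrite (subnS m j.+1) -{1}(subnK (ltnW lt)) mulnDl -mul_bin_diag.
by rewrite -mulnDr mulKn // subn_gt0.
Qed.

Lemma chebT_ucheb_sum c (x : int) :
  (2 * chebT c.*2.+3 x = ucheb_sum x c.*2.+3 - ucheb_sum x c.*2.+1)%R.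
Proof.
rewrite /chebT (_ : (c.*2.+3)./2 = c.+1); last by rewrite /= uphalf_double.
rewrite -(@ucheb_sum_range _ x c.*2.+3 c.+2) -?(@ucheb_sum_range _ x c.*2.+1 c.+1); try lia.
rewrite mulr_sumr big_ord_recl [X in (X - _)%R]big_ord_recl -addrA -sumrB /=.
congr (_ + _)%R.
  rewrite /ucheb_term !subn0 bin0 muln1 divnn /= subn1 /= mul1n.
  by rewrite -natz natrX exprMn !exprS; ring.
apply: eq_bigr => j _; have lt_jc := ltn_ord j.
rewrite (_ : bump 0 j = j.+1) // chebT_coef; last lia.
rewrite /ucheb_term (_ : c.*2.+3 - 2 * j.+1 - 1 = (c - j).*2)%N; last lia.
rewrite (_ : c.*2.+3 - 2 * j.+1 = (c - j).*2.+1)%N; last lia.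
rewrite (_ : c.*2.+1 - 2 * j = (c - j).*2.+1)%N; last lia.
rewrite (_ : c.*2.+3 - j.+2 = c.*2.+1 - j)%N; last lia.
by rewrite PoszM PoszD -!natz natrX exprMn !exprS; ring.
Qed.

Lemma chebT_tcheb b (x : int) : chebT b.*2.+1 x = tcheb x b.*2.+1.
Proof.
case: b => [|c].
  rewrite /chebT big_ord1 /tcheb /=.
  by rewrite [Posz _](_ : _ = 1%R) // subn0; ring.
apply: (mulfI (_ : (2 : int) != 0)) => //.
by rewrite doubleS chebT_ucheb_sum !ucheb_sumE tcheb_ucheb.
Qed.

Section TwoAdicValuation.
Local Open Scope ring_scope.
Implicit Types (x y t : int) (e f k n : nat).

Definition has_v2 e x : Prop := exists w : int, x = 2 ^+ e * (2 * w + 1).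

Lemma has_v2E e x : has_v2 e x -> v2 x = e.
Proof.
case=> w ->; have odd_w : ~~ (2 %| 2 * w + 1)%Z by rewrite rpredDl ?dvdz_mulr.
have w_gt0 : (0 < `|(2 * w + 1)%R|)%N by apply: odd_gt0; rewrite -[odd _]negbK -dvdn2.
rewrite /v2 abszM abszX lognM ?expn_gt0 // pfactorK // logn_coprime ?addn0 //.
by rewrite coprime2n -[odd _]negbK -dvdn2.
Qed.

Lemma has_v2M e f x y : has_v2 e x -> has_v2 f y -> has_v2 (e + f) (x * y).
Proof.
by case=> [w ->] [w' ->]; exists (2 * w * w' + w + w'); rewrite exprD; ring.
Qed.

Lemma tcheb_odd x k : has_v2 0 x -> has_v2 0 (tcheb x k).
Proof.
case=> a ->; rewrite expr0 mul1r.
elim: k => [|k [w IH]]; first by exists 0; rewrite /tcheb /=; ring.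
exists (2 * a * w + a + w + 2 * a * (a + 1) * ucheb (2 * a + 1) k).
by rewrite tchebS IH; ring.
Qed.

Lemma ucheb_mod2 x k : has_v2 0 x -> exists w, ucheb x k = k%:R + 2 * w.
Proof.
move=> x_odd; have [a x_eq] := x_odd; rewrite expr0 mul1r in x_eq.
elim: k => [|k [w IH]]; first by exists 0; rewrite /ucheb /=; ring.
have [w' T_eq] := tcheb_odd k x_odd; rewrite expr0 mul1r in T_eq.
by exists (w' + a * k%:R + 2 * a * w + w); rewrite uchebS T_eq IH x_eq -addn1 natrD; ring.
Qed.

Lemma has_v2_ucheb x k : has_v2 0 x -> (0 < k)%N -> has_v2 (logn 2 k) (ucheb x k).
Proof.
move=> x_odd k_gt0; have [q q_odd k_eq] := pfactor_coprime (isT : prime 2) k_gt0.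
rewrite [in ucheb x k]k_eq; elim: (logn 2 k) => [|e IH].
  rewrite muln1; have [w ->] := ucheb_mod2 q x_odd.
  exists (w + (q./2)%:R); rewrite -[in LHS](odd_double_half q) -coprime2n q_odd.
  by rewrite natrD -muln2 natrM /=; ring.
rewrite expnS mulnCA mul2n -addnn ucheb_double -add1n.
by apply: has_v2M IH; have [w ->] := tcheb_odd (q * 2 ^ e) x_odd; exists w; ring.
Qed.

Lemma has_v2_sqr_sub1 n t : (1 < n)%N -> has_v2 0 t ->
  has_v2 n.+1 ((1 + 2 ^+ n * t) ^+ 2 - 1).
Proof.
case: n => [|[|n]] // _ [w ->].
rewrite (_ : _ - 1 = 2 ^+ n.+2 * (2 * w + 1) * (2 ^+ 1 * (2 * (2 ^+ n * (2 * w + 1)) + 1))).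
  by rewrite -addn1; apply: has_v2M; [exists w | exists (2 ^+ n * (2 * w + 1))]; ring.
by rewrite !exprS; ring.
Qed.

Lemma Z2seq_odd (t : nat -> int) k : Z2seq t -> in_1_2Z2 t -> has_v2 0 (t k.+1).
Proof.
move=> t_Z2 t1_odd; suff /dvdzP[w t_eq] : (2 %| t k.+1 - 1)%Z.
  by exists w; rewrite expr0 mul1r mulrC -t_eq subrK.
elim: k => [//|k IH]; rewrite -(subrKA (t k.+1)) rpredD //.
by apply: dvdz_trans (t_Z2 k.+1); rewrite exprS dvdz_mulr.
Qed.

End TwoAdicValuation.

Lemma bigmax_ord_interval lo hi N :
  lo <= hi < N -> \max_(n < N | lo <= n <= hi) n = hi.
Proof.
case/andP=> lo_hi hi_N; apply/eqP; rewrite eqn_leq; apply/andP; split.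
  by apply/bigmax_leqP => n /andP[].
by apply: (bigmax_sup (Ordinal hi_N)) => //=; rewrite lo_hi leqnn.
Qed.

Lemma dvdn_pow2_double c N : 0 < c -> (2 ^ N %| c.*2) = (N <= (logn 2 c).+1).
Proof. by move=> c_gt0; rewrite pfactor_dvdn ?double_gt0 // -mul2n lognM. Qed.

Lemma logn2_consecutive b : 0 < b ->
  logn 2 b = 0 /\ 0 < logn 2 b.+1 \/ 0 < logn 2 b /\ logn 2 b.+1 = 0.
Proof.
move=> b_gt0; rewrite !logn_gt0 !mem_primes /= b_gt0 !dvdn2 /=.
by case: (boolP (odd b)) => b_odd; [left | right]; split => //;
  apply: logn_coprime; rewrite coprime2n /= ?b_odd ?negbK.
Qed.

Lemma s_of_double_succ b : 0 < b -> s_of b.*2.+1 = (logn 2 b + logn 2 b.+1).+1.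
Proof.
move=> b_gt0; have:= ltn_logl 2 b_gt0; have:= ltn_logl 2 (ltn0Sn b).
have:= logn2_consecutive b_gt0 => split_b lt1 lt2.
rewrite /s_of -(@bigmax_ord_interval 2 (logn 2 b + logn 2 b.+1).+1 b.*2.+3).
  apply: eq_bigl => n /=; rewrite (@dvdn_pow2_double b.+1 n isT) dvdn_pow2_double //.
  by case: split_b => -[e1 e2]; rewrite ?e1 ?e2 ?addn0; case: (leqP n 1) => //=; lia.
by case: split_b; lia.
Qed.

Lemma v2_chebT_sub m n (t : int) : 3 <= m -> odd m -> 1 < n -> has_v2 0 t ->
  v2 (chebT m (1 + 2 ^+ n * t) - (1 + 2 ^+ n * t))%R = s_of m + n + 1.
Proof.
move=> m_ge3 m_odd n_gt1 t_odd.
have x_odd : has_v2 0 (1 + 2 ^+ n * t).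
  by case: n n_gt1 => [//|n] _; exists (2 ^+ n * t)%R; rewrite expr0 exprS; ring.
have m_eq : m = (m./2).*2.+1 by rewrite -[LHS]odd_double_half m_odd.
set b := m./2 in m_eq; have b_gt0 : 0 < b by lia.
rewrite m_eq chebT_tcheb -addnn tcheb_double_succ_sub addnn s_of_double_succ //.
rewrite (_ : _ + 1 = 1 + n.+1 + logn 2 b.+1 + logn 2 b); last lia.
apply/has_v2E/has_v2M; last exact: has_v2_ucheb.
apply: has_v2M; last exact: has_v2_ucheb.
by apply: has_v2M; [exists 0; rewrite mulr0 add0r | exact: has_v2_sqr_sub1].
Qed.

Theorem mainTheorem6 (m : nat) (hm3 : 3 <= m) (hodd : odd m)
  (n : nat) (hn : 2 <= n) (t : nat -> int) (ht : Z2seq t) (ht1 : in_1_2Z2 t) :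
  exists K : nat, forall k : nat, K <= k ->
    v2 (chebT m (1 + 2 ^+ n * t k) - (1 + 2 ^+ n * t k))%R = s_of m + n + 1.
Proof.
exists 1 => -[//|k] _.
by apply: v2_chebT_sub => //; apply: Z2seq_odd.
Qed.
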